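(* Let $G$ be a complete split graph with vertex set $Q'\cup S'$ (disjoint), where $|Q'|\geq 1$, $|S'|\geq 2$, $Q'$ is a clique, $S'$ is a stable set, and every vertex of $Q'$ is adjacent to every vertex of $S'$. Then $\eta(G)=|Q'|$.
   Context: All graphs are finite, simple and undirected. For a vertex $v$, $N(v)$ is its set of neighbours. For a positive integer $k$, $[k]=\{1,\dots,k\}$. For a labeling $f:V(G)\to[k]$ and $S\subseteq V(G)$, $f(S)=\sum_{u\in S}f(u)$. A labeling $f:V(G)\to[k]$ is an additive $k$-coloring if $f(N(u))\neq f(N(v))$ for every edge $(u,v)$ of $G$. The additive chromatic number $\eta(G)$ is the least $k$ for which $G$ has an additive $k$-coloring. *)

From mathcomp Require Import all_boot.
Set Implicit Arguments. Unset Strict Implicit. Unset Printing Implicit Defensive.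

Definition simple_graph (T : finType) (e : rel T) : Prop :=
  symmetric e /\ irreflexive e.

Definition nbhd (T : finType) (e : rel T) (v : T) : {set T} := [set u | e v u].

Definition fsum (T : finType) (f : T -> nat) (S : {set T}) : nat :=
  \sum_(u in S) f u.

Definition additive_coloring (T : finType) (e : rel T) (k : nat) (f : T -> nat) : Prop :=
  (forall v, 1 <= f v <= k) /\
  (forall u v, e u v -> fsum f (nbhd e u) <> fsum f (nbhd e v)).

Definition has_additive_coloring (T : finType) (e : rel T) (k : nat) : Prop :=
  exists f : T -> nat, additive_coloring e k f.

Definition additive_chromatic_number_is (T : finType) (e : rel T) (k : nat) : Prop :=
  0 < k /\ has_additive_coloring e k /\
  (forall k', 0 < k' -> has_additive_coloring e k' -> k <= k').

Definition complete_split (T : finType) (e : rel T) (Q S : {set T}) : Prop :=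
  [disjoint Q & S] /\ Q :|: S = [set: T] /\
  (forall x y, x \in Q -> y \in Q -> x != y -> e x y) /\
  (forall x y, x \in S -> y \in S -> ~~ e x y) /\
  (forall x y, x \in Q -> y \in S -> e x y && e y x).

From mathcomp Require Import all_boot.
From mathcomp Require Import zify.
Set Implicit Arguments. Unset Strict Implicit. Unset Printing Implicit Defensive.

(* Every vertex q of the clique Q is universal, so f(N(q)) = f(V) - f(q); hence
   an additive colouring is injective on Q and needs at least |Q| colours.
   Conversely, colour Q injectively by 1..|Q| and all of S by |Q|: adjacent
   vertices of Q get distinct sums, and since f(N(s)) = f(Q) for s in S while
   f(N(q)) = f(Q) + |S||Q| - f(q) >= f(Q) + |Q| for q in Q (as |S| >= 2),
   edges between Q and S are fine too. *)

Lemma fsum_setD1 (T : finType) (f : T -> nat) (A : {set T}) x :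
  x \in A -> fsum f (A :\ x) + f x = fsum f A.
Proof.
move=> xA; rewrite /fsum [in RHS](bigD1 x) //= addnC; congr (_ + _).
by apply: eq_bigl => y; rewrite !inE andbC.
Qed.

Lemma fsum_setU (T : finType) (f : T -> nat) (A B : {set T}) :
  [disjoint A & B] -> fsum f (A :|: B) = fsum f A + fsum f B.
Proof. by move=> dAB; rewrite /fsum -(bigU _ _ _ dAB); apply: eq_bigl => y; rewrite !inE. Qed.

Lemma card_le_of_inj_bounded (T : finType) (A : {set T}) (f : T -> nat) k :
  {in A &, injective f} -> (forall x, x \in A -> 1 <= f x <= k) -> #|A| <= k.
Proof.
move=> f_inj f_bd.
have := @uniq_leq_size _ [seq f x | x <- enum A] (iota 1 k).
rewrite size_map size_iota -cardE; apply.
- by rewrite map_inj_in_uniq ?enum_uniq // => x y; rewrite !mem_enum; apply: f_inj.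
- by move=> y /mapP [x]; rewrite mem_enum => /f_bd xA ->; rewrite mem_iota; lia.
Qed.

Lemma additive_coloring_neq_universal (T : finType) (e : rel T) k f u v :
  additive_coloring e k f -> e u v ->
  nbhd e u = [set: T] :\ u -> nbhd e v = [set: T] :\ v -> f u != f v.
Proof.
move=> [_ f_add] euv Nu Nv; apply/eqP => fuv; apply: (f_add u v euv).
rewrite Nu Nv; apply/eqP.
by rewrite -(eqn_add2r (f u)) {2}fuv !fsum_setD1 ?inE.
Qed.

Section CompleteSplit.
Variables (T : finType) (e : rel T) (Q S : {set T}).
Hypotheses (e_simple : simple_graph e) (e_split : complete_split e Q S).

Lemma in_split_S x : x \notin Q -> x \in S.
Proof.
case: e_split => _ [QUS _] xNQ.
by have := in_setT x; rewrite -QUS inE (negbTE xNQ).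
Qed.

Lemma split_notin_S x : x \in Q -> x \notin S.
Proof. by case: e_split => dQS _ xQ; rewrite (disjointFr dQS xQ). Qed.

Lemma nbhd_split_clique x : x \in Q -> nbhd e x = [set: T] :\ x.
Proof.
move=> xQ; case: e_simple => _ e_irr; case: e_split => _ [_ [eQQ [_ eQS]]].
apply/setP => y; rewrite !inE andbT.
have [->|yNx] := eqVneq y x; first by rewrite e_irr.
have [yQ|/in_split_S yS] := boolP (y \in Q); first by apply: eQQ; rewrite // eq_sym.
by case/andP: (eQS x y xQ yS).
Qed.

Lemma nbhd_split_stable x : x \in S -> nbhd e x = Q.
Proof.
move=> xS; case: e_split => _ [_ [_ [eSS eQS]]].
apply/setP => y; rewrite inE.
have [yQ|/in_split_S yS] := boolP (y \in Q); first by case/andP: (eQS y x yQ xS).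
exact: negbTE (eSS x y xS yS).
Qed.

Lemma fsum_split (f : T -> nat) : fsum f [set: T] = fsum f Q + fsum f S.
Proof. by case: e_split => dQS [<- _]; rewrite fsum_setU. Qed.

Lemma additive_coloring_inj_clique k f :
  additive_coloring e k f -> {in Q &, injective f}.
Proof.
case: e_split => _ [_ [eQQ _]] f_col u v uQ vQ fuv; apply/eqP/negPn/negP => uNv.
have := additive_coloring_neq_universal f_col (eQQ u v uQ vQ uNv)
  (nbhd_split_clique uQ) (nbhd_split_clique vQ).
by rewrite fuv eqxx.
Qed.

Lemma split_colors_lower_bound k : has_additive_coloring e k -> #|Q| <= k.
Proof.
move=> [f f_col]; apply: card_le_of_inj_bounded (additive_coloring_inj_clique f_col) _.
by move=> x _; case: f_col => f_bd _; apply: f_bd.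
Qed.

Definition split_coloring (x : T) : nat :=
  if x \in Q then (index x (enum Q)).+1 else #|Q|.

Lemma split_coloring_clique_bounds x : x \in Q -> 1 <= split_coloring x <= #|Q|.
Proof. by move=> xQ; rewrite /split_coloring xQ /= cardE index_mem mem_enum. Qed.

Lemma fsum_split_coloring_stable : fsum split_coloring S = #|S| * #|Q|.
Proof.
rewrite /fsum (eq_bigr (fun _ => #|Q|)) ?sum_nat_const // => y yS.
by rewrite /split_coloring; case: ifP => // /split_notin_S; rewrite yS.
Qed.

Lemma split_coloring_clique_lt_stable u v :
  2 <= #|S| -> u \in Q -> v \in S ->
  fsum split_coloring (nbhd e v) < fsum split_coloring (nbhd e u).
Proof.
move=> S_ge2 uQ vS; rewrite nbhd_split_stable // nbhd_split_clique //.
have := fsum_setD1 split_coloring (in_setT u).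
rewrite fsum_split fsum_split_coloring_stable.
have := split_coloring_clique_bounds uQ; have := leq_mul S_ge2 (leqnn #|Q|); lia.
Qed.

Lemma split_coloring_additive :
  1 <= #|Q| -> 2 <= #|S| -> additive_coloring e #|Q| split_coloring.
Proof.
move=> Q_ge1 S_ge2; case: e_split => _ [_ [_ [eSS _]]].
have inj : {in Q &, injective split_coloring}.
  move=> u v uQ vQ; rewrite /split_coloring uQ vQ => -[].
  by apply: index_inj; rewrite ?mem_enum.
split=> [v | u v euv].
  case: (boolP (v \in Q)) => [/split_coloring_clique_bounds //|vNQ].
  by rewrite /split_coloring (negbTE vNQ) Q_ge1 leqnn.
have [uQ|/in_split_S uS] := boolP (u \in Q); have [vQ|/in_split_S vS] := boolP (v \in Q).
- rewrite !nbhd_split_clique // => /eqP; rewrite -(eqn_add2r (split_coloring u)).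
  rewrite fsum_setD1 ?inE // -(fsum_setD1 split_coloring (in_setT v)) eqn_add2l.
  move=> /eqP/(inj v u vQ uQ) vu; case: e_simple => _ e_irr.
  by move: euv; rewrite vu e_irr.
- by move/eqP; rewrite gtn_eqF ?split_coloring_clique_lt_stable.
- by move/eqP; rewrite ltn_eqF ?split_coloring_clique_lt_stable.
- by move: euv; rewrite (negbTE (eSS u v uS vS)).
Qed.

End CompleteSplit.

Theorem mainTheorem11 (T : finType) (e : rel T) (Q S : {set T}) :
  simple_graph e -> complete_split e Q S ->
  1 <= #|Q| -> 2 <= #|S| ->
  additive_chromatic_number_is e #|Q|.
Proof.
move=> e_simple e_split Q_ge1 S_ge2; split=> //; split.
- by exists (split_coloring Q); apply: split_coloring_additive e_simple e_split _ _.
- by move=> k _; apply: split_colors_lower_bound e_simple e_split k.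
Qed.
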